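(* Let $n_0, L\in\mathbb{N}_+$, $n_1,\dots,n_L\in\mathbb{N}_+$, and let $h_l\in\mathrm{RL}(n_{l-1},n_l)$ for $l=1,\dots,L$, with $\mathbf{h}=(h_1,\dots,h_L)$. Let $\gamma\in\Gamma$. Then $$|\mathcal{S}_{\mathbf{h}}|\le\big\|B^{(\gamma)}_{n_L}M_{n_{L-1},n_L}\cdots B^{(\gamma)}_{n_1}M_{n_0,n_1}e_{n_0+1}\big\|_1,$$ where $e_{n_0+1}\in\mathbb{R}^{n_0+1}$ is the standard unit vector with $1$ in position $n_0+1$ and $0$ elsewhere.
   Context: $\mathbb{N}=\{0,1,2,\dots\}$, $\mathbb{N}_+=\mathbb{N}\setminus\{0\}$, $\sigma(x)=\max(0,x)$. For $n,n'\in\mathbb{N}_+$, $\mathrm{RL}(n,n')$ is the set of maps $h:\mathbb{R}^n\to\mathbb{R}^{n'}$, $h(x)_i=\sigma(\langle x,w_i\rangle+b_i)$, for some $W\in\mathbb{R}^{n'\times n}$ with rows $w_i$ and $b\in\mathbb{R}^{n'}$. Signature: $S_h(x)_i=1$ iff $\langle x,w_i\rangle+b_i>0$, else $0$; $\mathcal{S}_h=\{S_h(x):x\in\mathbb{R}^n\}$. Convention: $\mathrm{RL}(0,n')$ consists of constant maps $\{0\}\to\mathbb{R}^{n'}$ and for such $h$, $\mathcal{H}_{n'}(\mathcal{S}_h)={\rm e}_0$. Multi signature: $S_{\mathbf{h}}(x)=(S_{h_1}(x),S_{h_2}(h_1(x)),\dots,S_{h_L}(h_{L-1}\circ\dots\circ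 h_1(x)))$, $\mathcal{S}_{\mathbf{h}}=\{S_{\mathbf{h}}(x):x\in\mathbb{R}^{n_0}\}$; $|s|=\sum_i s_i$. $V$: sequences $(v_j)_{j\in\mathbb{N}}$ in $\mathbb{N}$ with finite sum; ${\rm e}_i$ has $({\rm e}_i)_j=\delta_{ij}$. $v\preceq w$ iff $\sum_{j\ge J}v_j\le\sum_{j\ge J}w_j$ for all $J$. For a finite family, $\max_i(v^{(i)})_J=\max_i\sum_{j\ge J}v^{(i)}_j-\max_i\sum_{j\ge J+1}v^{(i)}_j$. $\mathcal{H}_{n'}(\mathcal{S})=(|\{s\in\mathcal{S}:|s|=j\}|)_j$ for $\mathcal{S}\subseteq\{0,1\}^{n'}$. $\Gamma$ is the set of families $(\gamma_{n,n'})_{n'\in\mathbb{N}_+,n\in\{0,\dots,n'\}}$ in $V$ with (i) $\max\{\mathcal{H}_{n'}(\mathcal{S}_h):h\in\mathrm{RL}(n,n')\}\preceq\gamma_{n,n'}$ and (ii) $n\le\tilde n\le n'\Rightarrow\gamma_{n,n'}\preceq\gamma_{\tilde n,n'}$. Clipping: $\mathrm{cl}_{i^*}(v)_i=v_i$ ($i<i^*$), $\sum_{j\ge i^*}v_j$ ($i=i^*$), $0$ ($i>i^*$). Bound matrix: for $\gamma\in\Gamma$, $n'\in\mathbb{N}_+$, $B^{(\gamma)}_{n'}\in\mathbb{N}^{(n'+1)\times(n'+1)}$ with $(B^{(\gamma)}_{n'})_{i,j}=(\mathrm{cl}_{j-1}(\gamma_{j-1,n'}))_{i-1}$ for $i,j\in\{1,\dots,n'+1\}$.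 Connector matrix: for $n,n'\in\mathbb{N}$, $M_{n,n'}\in\mathbb{R}^{(n'+1)\times(n+1)}$ with $(M_{n,n'})_{i,j}=\delta_{i,\min(j,n'+1)}$. *)

From HB Require Import structures.
From mathcomp Require Import all_boot all_order all_algebra.
From mathcomp Require Import boolp reals.
Set Implicit Arguments. Unset Strict Implicit. Unset Printing Implicit Defensive.
Import Order.TTheory GRing.Theory Num.Theory.

Record layer (R : realType) (n n' : nat) := Layer {
  lW : 'M[R]_(n', n);
  lb : 'cV[R]_n' }.

Definition preact (R : realType) n n' (h : layer R n n') (x : 'cV[R]_n)
  : 'cV[R]_n' := (lW h *m x + lb h)%R.

Definition relu (R : realType) (t : R) : R := Num.max 0%R t.

Definition lapply (R : realType) n n' (h : layer R n n') (x : 'cV[R]_n)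
  : 'cV[R]_n' := map_mx (@relu R) (preact h x).

Definition lsig (R : realType) n n' (h : layer R n n') (x : 'cV[R]_n)
  : {ffun 'I_n' -> bool} := [ffun i => (0 < preact h x i 0)%R].

Definition sigset (R : realType) n n' (h : layer R n n')
  : {set {ffun 'I_n' -> bool}} :=
  [set s | `[< exists x : 'cV[R]_n, lsig h x = s >]].

(* ---------- the space V (finitely supported nat sequences, as seq nat,
   entries beyond the size being 0) ---------- *)
Definition tailsum (v : seq nat) (J : nat) : nat := sumn (drop J v).

Definition vle (v w : seq nat) : Prop := forall J, tailsum v J <= tailsum w J.

Definition ve (i : nat) : seq nat := rcons (nseq i 0%N) 1%N.

(* max of a finite family (F a)_{a in A}, via the tail-sum formula *)
Definition vmax (I : finType) (A : {set I}) (F : I -> seq nat) : seq nat :=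
  mkseq (fun J => (\max_(a in A) tailsum (F a) J
                   - \max_(a in A) tailsum (F a) J.+1)%N)
        (\max_(a in A) size (F a)).

Definition bweight n (s : {ffun 'I_n -> bool}) : nat := #|[set i | s i]|.

Definition hist n' (S : {set {ffun 'I_n' -> bool}}) : seq nat :=
  mkseq (fun j => #|[set s in S | bweight s == j]|) n'.+1.

Definition RLsigsets (R : realType) n n' : {set {set {ffun 'I_n' -> bool}}} :=
  [set S | `[< exists h : layer R n n', sigset h = S >]].

(* max { H_{n'}(S_h) : h in RL(n,n') }, with the convention that for n = 0
   every H_{n'}(S_h) equals e_0 (so the max is e_0) *)
Definition maxhist (R : realType) n n' : seq nat :=
  if n == 0%N then ve 0 else vmax (RLsigsets R n n') (@hist n').

(* gamma in Gamma; gamma n n' only matters for n' >= 1, n <= n' *)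
Definition inGamma (R : realType) (gamma : nat -> nat -> seq nat) : Prop :=
  (forall n n', (0 < n')%N -> (n <= n')%N -> vle (maxhist R n n') (gamma n n'))
  /\ (forall n nt n', (0 < n')%N -> (n <= nt)%N -> (nt <= n')%N ->
        vle (gamma n n') (gamma nt n')).

Definition clip (istar : nat) (v : seq nat) (i : nat) : nat :=
  if (i < istar)%N then nth 0%N v i
  else if i == istar then tailsum v istar else 0%N.

(* bound matrix B^{(gamma)}_{n'}, 0-indexed: B i j = cl_j(gamma_{j,n'})_i *)
Definition boundmx (R : realType) (gamma : nat -> nat -> seq nat) (n' : nat)
  : 'M[R]_(n'.+1) :=
  \matrix_(i < n'.+1, j < n'.+1) (clip j (gamma j n') i)%:R%R.

(* connector matrix M_{n,n'}, 0-indexed: M i j = delta_{i, min(j, n')} *)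
Definition connmx (R : realType) (n n' : nat) : 'M[R]_(n'.+1, n.+1) :=
  \matrix_(i < n'.+1, j < n.+1) ((i : nat) == minn j n')%:R%R.

(* widths n : nat -> nat (n_0, n_1, ...), layers hs l in RL(n_l, n_{l+1})
   (i.e. h_{l+1} in the paper); only l < L is used. *)
Section Net.
Variables (R : realType) (n : nat -> nat)
          (hs : forall l : nat, layer R (n l) (n l.+1)).

Fixpoint fwd (k : nat) : 'cV[R]_(n 0) -> 'cV[R]_(n k) :=
  match k return 'cV[R]_(n 0) -> 'cV[R]_(n k) with
  | 0 => id
  | k'.+1 => fun x => lapply (hs k') (fwd k' x)
  end.

Definition msig (L : nat) (x : 'cV[R]_(n 0))
  : {dffun forall l : 'I_L, {ffun 'I_(n (nat_of_ord l).+1) -> bool}} :=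
  [ffun l : 'I_L => lsig (hs l) (fwd l x)].

Definition msigset (L : nat) :=
  [set s | `[< exists x : 'cV[R]_(n 0), msig L x = s >]].

End Net.

Fixpoint chainvec (R : realType) (gamma : nat -> nat -> seq nat)
  (n : nat -> nat) (k : nat) : 'cV[R]_((n k).+1) :=
  match k return 'cV[R]_((n k).+1) with
  | 0 => \col_(i < (n 0).+1) ((i : nat) == n 0)%:R%R
  | k'.+1 => boundmx R gamma (n k'.+1) *m connmx R (n k') (n k'.+1)
               *m chainvec R gamma n k'
  end.

Definition norm1 (R : realType) m (v : 'cV[R]_m) : R := (\sum_(i < m) `|v i 0|)%R.

From mathcomp Require Import all_boot all_order all_algebra.
From mathcomp Require Import boolp reals.
From mathcomp Require Import zify.
Import Order.TTheory GRing.Theory Num.Theory.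

Set Implicit Arguments.
Unset Strict Implicit.
Unset Printing Implicit Defensive.

(* Partition the inputs by their first l layer signatures.  On each region the
   network up to layer l is affine with image in an affine subspace of some
   dimension d.  A further layer with signature t maps this subspace into one of
   dimension min(d, |t|), and the signatures it produces on the region are those
   of a single layer in RL(min(d, n'), n'); by property (i) of gamma, at most
   the K-th tail sum of gamma_{min(d,n'),n'} of them have weight at least K.
   So the number of regions of dimension at least K is dominated, tail sum by
   tail sum, by B M ... B M e: by property (ii) these tail sums are monotone in
   d, and Abel summation carries the domination through each layer.  At K = 0
   the regions are all the multi-signatures. *)

Lemma tailsumS v J : tailsum v J = nth 0 v J + tailsum v J.+1.
Proof.
rewrite /tailsum; case: (ltnP J (size v)) => hJ; first by rewrite (drop_nth 0 hJ).
by rewrite !drop_oversize ?nth_default // (leq_trans hJ).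
Qed.

Lemma tailsum_mkseq f m J : tailsum (mkseq f m) J = \sum_(J <= j < m) f j.
Proof. by rewrite /tailsum /mkseq -map_drop drop_iota add0n sumnE big_map. Qed.

Lemma tailsum_nat_cat v {J j} : J <= j ->
  tailsum v J = \sum_(J <= i < j) nth 0 v i + tailsum v j.
Proof.
elim: j => [|j IH]; first by rewrite leqn0 => /eqP ->; rewrite big_geq.
rewrite leq_eqVlt => /orP [/eqP ->|]; first by rewrite big_geq.
by move=> /[dup] le_Jj /IH ->; rewrite [in RHS]big_nat_recr //= -addnA -tailsumS.
Qed.

Lemma tailsum_clip N j v J : j <= N ->
  \sum_(i < N.+1 | J <= i) clip j v i = if J <= j then tailsum v J else 0.
Proof.
move=> le_jN.
have -> : \sum_(i < N.+1 | J <= i) clip j v i = \sum_(J <= i < N.+1) clip j v i.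
  by rewrite big_geq_mkord.
have clip_lt i : i < j -> clip j v i = nth 0 v i by rewrite /clip => ->.
have clip_gt i : j < i -> clip j v i = 0 by move=> lt_ji; rewrite /clip ltnNge ltnW ?gtn_eqF.
have sum_gt a : j < a -> \sum_(a <= i < N.+1) clip j v i = 0.
  by move=> lt_ja; rewrite big_nat_cond big1 // => i /andP [/andP [/(leq_trans lt_ja) /clip_gt]].
case: leqP => [le_Jj|/sum_gt //].
rewrite (big_cat_nat (n := j)) //=; last exact: leq_trans le_jN _.
rewrite [X in _ + X]big_ltn ?ltnS // sum_gt // /clip ltnn eqxx addn0.
rewrite (tailsum_nat_cat v le_Jj); congr (_ + _).
by apply: eq_big_nat => i /andP [_ /clip_lt].
Qed.

Lemma bweight_le {n} (s : {ffun 'I_n -> bool}) : bweight s <= n.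
Proof. by rewrite /bweight -[n in _ <= n]card_ord max_card. Qed.

Lemma tailsum_hist n' (S : {set {ffun 'I_n' -> bool}}) J :
  tailsum (hist S) J = #|[set s in S | J <= bweight s]|.
Proof.
rewrite /hist tailsum_mkseq -sum1dep_card.
under eq_bigr => j _ do rewrite -sum1dep_card big_mkcond /=.
rewrite exchange_big [RHS]big_mkcond /=; apply: eq_bigr => s _.
case: (s \in S) => /=; last by rewrite big1.
rewrite -big_mkcond sum1_count.
rewrite (eq_count (a2 := pred1 (bweight s))) => [|j]; last exact: eq_sym.
rewrite count_uniq_mem ?iota_uniq // mem_iota.
by have := bweight_le s; case: (J <= bweight s) => /=; lia.
Qed.

Lemma telescope_sumn_nonincr (f : nat -> nat) J S : (forall k, f k.+1 <= f k) ->
  J <= S -> \sum_(J <= k < S) (f k - f k.+1) = f J - f S.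
Proof.
move=> f_decr; elim: S => [|S IH]; first by rewrite leqn0 => /eqP ->; rewrite big_geq // subnn.
rewrite leq_eqVlt => /orP [/eqP ->|]; first by rewrite big_geq // subnn.
have f_mono k k' : k <= k' -> f k' <= f k.
  by move=> /subnK <-; elim: (k' - k) => //= i; apply: leq_trans (f_decr _).
rewrite ltnS => le_JS; rewrite big_nat_recr //= IH //.
by have := f_mono J S le_JS; have := f_decr S; lia.
Qed.

Lemma tailsum_vmax (I : finType) (A : {set I}) F J :
  tailsum (vmax A F) J = \max_(a in A) tailsum (F a) J.
Proof.
pose M J := \max_(a in A) tailsum (F a) J; pose S := \max_(a in A) size (F a).
have M_decr k : M k.+1 <= M k.
  apply/bigmax_leqP => a aA; apply: leq_trans (leq_bigmax_cond _ aA).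
  by rewrite [leqRHS]tailsumS leq_addl.
have M0 K : S <= K -> M K = 0.
  move=> le_SK; apply/eqP; rewrite -leqn0; apply/bigmax_leqP => a aA.
  by rewrite /tailsum drop_oversize //; apply: leq_trans le_SK; exact: leq_bigmax_cond.
rewrite /vmax tailsum_mkseq -/S -/(M J); case: (leqP J S) => [le_JS|/ltnW le_SJ].
  by rewrite (@telescope_sumn_nonincr M) // (M0 S) ?subn0.
by rewrite big_geq ?M0.
Qed.

Section Increments.
Variable R : numDomainType.
Local Open Scope ring_scope.

Definition increment (G : nat -> R) (K : nat) : R :=
  G K - (if K is K'.+1 then G K' else 0).

Lemma sum_increment G {N d} : (d <= N)%N ->
  \sum_(K < N.+1 | (K <= d)%N) increment G K = G d.
Proof.
move=> le_dN; rewrite -(big_mkord (fun K => K <= d)%N) (big_cat_nat (n := d.+1)) //=.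
rewrite [X in _ + X]big_nat_cond [X in _ + X]big1 ?addr0; last first.
  by move=> K /andP [/andP [lt_dK _]]; rewrite leqNgt lt_dK.
have -> : \sum_(0 <= K < d.+1 | (K <= d)%N) increment G K = \sum_(0 <= K < d.+1) increment G K.
  by rewrite big_nat_cond [RHS]big_nat_cond; apply: eq_bigl => K; rewrite ltnS andbT -andbA andbb.
by rewrite (telescope_sumr_eq (fun K => if K is K'.+1 then G K' else 0)) ?subr0.
Qed.

Lemma increment_ge0 G : {homo G : i j / (i <= j)%N >-> i <= j} -> 0 <= G 0%N ->
  forall K, 0 <= increment G K.
Proof. by move=> G_mono G0 [|K]; rewrite /increment ?subr0 // subr_ge0 G_mono. Qed.

Lemma sum_by_increments {I : finType} {P : pred I} (c : I -> R) {d : I -> nat} {N} G :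
  (forall i, P i -> d i <= N)%N ->
  \sum_(i | P i) c i * G (d i) =
  \sum_(K < N.+1) increment G K * \sum_(i | P i && (K <= d i)%N) c i.
Proof.
move=> le_dN.
under eq_bigr => i Pi do rewrite -(sum_increment G (le_dN i Pi)) mulr_sumr.
rewrite (exchange_big_dep xpredT) //=; apply: eq_bigr => K _.
by rewrite mulr_sumr; apply: eq_bigr => i _; rewrite mulrC.
Qed.

Lemma ler_sum_by_tails (I : finType) (S : {set I}) (d : I -> nat) N
    (w : 'I_N.+1 -> R) (G : nat -> R) :
  (forall a, a \in S -> d a <= N)%N ->
  {homo G : i j / (i <= j)%N >-> i <= j} -> 0 <= G 0%N ->
  (forall K, #|[set a in S | (K <= d a)%N]|%:R <= \sum_(i < N.+1 | (K <= i)%N) w i) ->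
  \sum_(a in S) G (d a) <= \sum_(i < N.+1) w i * G i.
Proof.
move=> le_dN G_mono G0 tails.
under eq_bigr do rewrite -[G _]mul1r.
rewrite (sum_by_increments _ _ le_dN) (@sum_by_increments _ xpredT w val N) => [|i _]; last first.
  by rewrite -ltnS; exact: ltn_ord.
apply: ler_sum => K _; apply: ler_wpM2l; first exact: increment_ge0.
rewrite sumr_const (eq_card (B := [set a in S | (K <= d a)%N])) => [|a]; last by rewrite inE.
exact: tails.
Qed.

End Increments.

Definition finrange (X : Type) (A : finType) (f : X -> A) : {set A} :=
  [set a | `[< exists x, f x = a >]].

Lemma finrangeP (X : Type) (A : finType) (f : X -> A) a :
  reflect (exists x, f x = a) (a \in finrange f).
Proof. by rewrite inE; exact: asboolP. Qed.

Lemma mem_finrange (X : Type) (A : finType) (f : X -> A) x : f x \in finrange f.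
Proof. by apply/finrangeP; exists x. Qed.

Lemma card_finrange_le (X : Type) (x0 : X) (A B : finType) (f : X -> A) (g : X -> B) :
  (forall x y, f x = f y -> g x = g y) -> #|finrange g| <= #|finrange f|.
Proof.
move=> fg.
pose phi a := if pselect (exists x, f x = a) is left ex then g (projT1 (cid ex)) else g x0.
have phiE x : phi (f x) = g x.
  rewrite /phi; case: pselect => [ex|[]]; last by exists x.
  by case: (cid ex) => y /= /fg.
suff -> : finrange g = [set phi a | a in finrange f] by exact: leq_imset_card.
apply/setP => b; apply/finrangeP/imsetP => [[x <-]|[_ /finrangeP [x <-] ->]].
  by exists (f x); rewrite ?mem_finrange ?phiE.
by exists x; rewrite phiE.
Qed.

Lemma card_fibers_fst (A B : finType) (S : {set A * B}) (S1 : {set A}) :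
  (forall p, p \in S -> p.1 \in S1) -> #|S| = \sum_(a in S1) #|[set b | (a, b) \in S]|.
Proof.
move=> S_S1; under eq_bigr do rewrite -sum1dep_card.
rewrite pair_big_dep -sum1_card; apply: eq_bigl => -[a b] /=.
by case: (boolP ((a, b) \in S)) => [/S_S1 ->|]; rewrite ?andbF.
Qed.

Section Layers.
Variable R : realType.
Local Open Scope ring_scope.

Definition mask_mx m (t : {ffun 'I_m -> bool}) : 'M[R]_m := diag_mx (\row_i (t i)%:R).

Lemma lapply_mask m m' (h : layer R m m') z :
  lapply h z = mask_mx (lsig h z) *m preact h z.
Proof.
apply/matrixP => i k; rewrite (ord1 k) mul_diag_mx !mxE ffunE /relu maxElt /preact !mxE.
by case: ifP; rewrite ?mul1r ?mul0r.
Qed.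

Lemma mask_mx_factor m (t : {ffun 'I_m -> bool}) :
  exists (P : 'M[R]_(m, bweight t)) (Q : 'M[R]_(bweight t, m)), mask_mx t = P *m Q.
Proof.
pose A := [set i | t i]; pose P : 'M[R]_(m, #|A|) := \matrix_(i, k) (i == enum_val k)%:R.
exists P, P^T; apply/matrixP => i j; rewrite !mxE.
rewrite (eq_bigr (fun k => (i == enum_val k)%:R * (j == enum_val k)%:R)) => [|k _]; last first.
  by rewrite !mxE.
rewrite -(@big_enum_val _ _ _ _ (fun x => x \in A) (fun a => (i == a)%:R * (j == a)%:R)) /=.
case: (boolP (i \in A)) => Ai.
  rewrite (bigD1 i) //= eqxx mul1r big1 ?addr0 => [|a /andP [_ /negbTE]]; last first.
    by rewrite eq_sym => ->; rewrite mul0r.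
  by move: Ai; rewrite inE eq_sym => ->.
rewrite big1 => [|a Aa]; last by rewrite eq_sym (negbTE (memPn Ai a Aa)) mul0r.
by move: Ai; rewrite inE => /negbTE ->; rewrite mul0rn.
Qed.

Lemma lapply_affine m m' d (h : layer R m m') (A : 'M[R]_(m, d)) c
    (t : {ffun 'I_m' -> bool}) :
  exists (A' : 'M[R]_(m', minn d (bweight t))) c', forall y,
    lsig h (A *m y + c) = t -> exists y', lapply h (A *m y + c) = A' *m y' + c'.
Proof.
case: (leqP d (bweight t)) => _.
  exists (mask_mx t *m (lW h *m A)), (mask_mx t *m (lW h *m c + lb h)) => y sig_t.
  by exists y; rewrite lapply_mask sig_t /preact !mulmxDr addrA !mulmxA.
have [P [Q maskE]] := mask_mx_factor t.
exists P, 0 => y sig_t; exists (Q *m preact h (A *m y + c)).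
by rewrite lapply_mask sig_t maskE mulmxA addr0.
Qed.

Lemma lsig_affine_sigset m m' d (h : layer R m m') (A : 'M[R]_(m, d)) c :
  exists g : layer R (minn d m') m', forall y, lsig h (A *m y + c) \in sigset g.
Proof.
case: (leqP d m') => _.
  exists (Layer (lW h *m A) (lW h *m c + lb h)) => y; rewrite inE; apply/asboolP.
  by exists y; apply/ffunP => i; rewrite !ffunE /preact /= mulmxDr addrA mulmxA.
exists (Layer 1%:M 0) => y; rewrite inE; apply/asboolP.
exists (\col_i (lsig h (A *m y + c) i)%:R); apply/ffunP => i.
by rewrite [LHS]ffunE /preact /= mul1mx addr0 mxE ltr0n lt0b.
Qed.

Lemma card_sigset_tail k m' (g : layer R k m') K : (K <= k)%N ->
  (#|[set t in sigset g | K <= bweight t]| <= tailsum (maxhist R k m') K)%N.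
Proof.
case: k g => [|k] g le_Kk; rewrite /maxhist /=.
  move: le_Kk; rewrite leqn0 => /eqP ->.
  apply: (@leq_trans #|[set lsig g 0]|); last by rewrite cards1.
  by apply/subset_leq_card/subsetP => t /[!inE] /andP [/asboolP [x <-] _]; rewrite [x]flatmx0.
rewrite tailsum_vmax -tailsum_hist; apply: (leq_bigmax_cond (sigset g)).
by rewrite inE; apply/asboolP; exists g.
Qed.

End Layers.

(* The K-th tail sum of column [minn k n'] of [boundmx gamma n'], i.e. of
   column [k] of [boundmx gamma n' *m connmx m n'] (see [chainvec_tail]). *)
Definition bound_col_tail (gamma : nat -> nat -> seq nat) n' K k : nat :=
  if K <= minn k n' then tailsum (gamma (minn k n') n') K else 0.

Section Bounds.
Variables (R : realType) (gamma : nat -> nat -> seq nat).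
Hypothesis gammaP : inGamma R gamma.

Lemma bound_col_tail_homo n' K : 0 < n' -> {homo bound_col_tail gamma n' K : k k' / k <= k'}.
Proof.
move=> n'_gt0 k k' le_kk'; rewrite /bound_col_tail.
have le_min : minn k n' <= minn k' n' by rewrite leq_min geq_minr (leq_trans (geq_minl _ _)).
case: ifP => // le_K; rewrite (leq_trans le_K le_min).
exact: gammaP.2 _ _ _ n'_gt0 le_min (geq_minr _ _) K.
Qed.

Lemma card_lsig_affine_tail m m' d (h : layer R m m') (A : 'M[R]_(m, d)) c K : 0 < m' ->
  #|[set t in finrange (fun y => lsig h (A *m y + c)) | K <= minn d (bweight t)]|
    <= bound_col_tail gamma m' K d.
Proof.
move=> m'_gt0; rewrite /bound_col_tail; case: (leqP K (minn d m')) => [le_K|lt_K]; last first.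
  rewrite leqn0 cards_eq0; apply/eqP/setP => t; rewrite !inE; apply/negbTE.
  by have := bweight_le t; rewrite negb_and; lia.
have [g sig_g] := lsig_affine_sigset h A c.
apply: leq_trans (gammaP.1 _ _ m'_gt0 (geq_minr _ _) K).
apply: leq_trans (card_sigset_tail g le_K).
apply/subset_leq_card/subsetP => _ /[!inE] /andP [/asboolP [y <-] le_Kt].
by rewrite (leq_trans le_Kt (geq_minr _ _)) andbT; have := sig_g y; rewrite inE.
Qed.

End Bounds.

Section ChainVector.
Variables (R : realType) (gamma : nat -> nat -> seq nat) (n : nat -> nat).
Local Open Scope ring_scope.

Local Notation v := (chainvec R gamma n).

Lemma chainvecS l (r : 'I_(n l.+1).+1) :
  v l.+1 r 0 = \sum_(k < (n l).+1)
    (clip (minn k (n l.+1)) (gamma (minn k (n l.+1)) (n l.+1)) r)%:R * v l k 0.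
Proof.
rewrite /= mxE; apply: eq_bigr => k _; rewrite mxE.
have k_lt : (minn k (n l.+1) < (n l.+1).+1)%N by rewrite ltnS geq_minr.
rewrite (bigD1 (Ordinal k_lt)) //= !mxE eqxx mulr1 big1 ?addr0 // => j.
by rewrite -val_eqE /= => /negbTE j_neq; rewrite !mxE j_neq mulr0.
Qed.

Lemma chainvec_ge0 l i : 0 <= v l i 0.
Proof.
elim: l i => [|l IH] i; first by rewrite mxE ler0n.
by rewrite chainvecS sumr_ge0 // => k _; rewrite mulr_ge0.
Qed.

Lemma chainvec_tail l K :
  \sum_(i < (n l.+1).+1 | (K <= i)%N) v l.+1 i 0 =
  \sum_(k < (n l).+1) v l k 0 * (bound_col_tail gamma (n l.+1) K k)%:R.
Proof.
under eq_bigr do rewrite chainvecS.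
rewrite exchange_big /=; apply: eq_bigr => k _.
by rewrite -mulr_suml -natr_sum tailsum_clip ?geq_minr // mulrC.
Qed.

End ChainVector.

Section Network.
Variables (R : realType) (n : nat -> nat) (hs : forall l : nat, layer R (n l) (n l.+1)).
Local Open Scope ring_scope.

(* The first l layer signatures of an input, as nested pairs: unlike [msig],
   its type is built up one layer at a time. *)
Fixpoint psig_type l : finType :=
  if l is l'.+1 then (psig_type l' * {ffun 'I_(n l'.+1) -> bool})%type else unit.

Fixpoint psig l (x : 'cV[R]_(n 0)) : psig_type l :=
  if l is l'.+1 return psig_type l then (psig l' x, lsig (hs l') (fwd hs l' x)) else tt.

Fixpoint rdim l : psig_type l -> nat :=
  if l is l'.+1 return psig_type l -> nat then fun p => minn (@rdim l' p.1) (bweight p.2)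
  else fun _ => n 0.
Arguments rdim : clear implicits.

Lemma rdim_le l a : (rdim l a <= n l)%N.
Proof. by case: l a => [|l] // a; rewrite geq_min bweight_le orbT. Qed.

Lemma psig_affine l (a : psig_type l) :
  exists (A : 'M[R]_(n l, rdim l a)) c, forall x, psig l x = a -> exists y, fwd hs l x = A *m y + c.
Proof.
elim: l a => [|l IH] a.
  by exists 1%:M, 0 => x _; exists x; rewrite mul1mx addr0.
case: a => a t; have [A [c fwdE]] := IH a.
have [A' [c' lapplyE]] := lapply_affine (hs l) A c t.
exists A', c' => x [/fwdE [y fwd_x] sig_x] /=.
by rewrite fwd_x; apply: lapplyE; rewrite -fwd_x.
Qed.

Lemma psig_msig L x y : psig L x = psig L y -> msig hs L x = msig hs L y.
Proof.
suff psig_lsig k : psig L x = psig L y -> (k < L)%N ->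
    lsig (hs k) (fwd hs k x) = lsig (hs k) (fwd hs k y).
  by move=> psig_xy; apply/ffunP => k; rewrite !ffunE psig_lsig.
elim: L => [//|L IH] [psig_xy lsig_xy]; rewrite ltnS leq_eqVlt => /orP [/eqP -> //|].
exact: IH.
Qed.

Lemma card_msigset_le L : (#|msigset hs L| <= #|finrange (psig L)|)%N.
Proof. exact: (card_finrange_le 0 (@psig_msig L)). Qed.

End Network.
Arguments rdim {n} l.

Section Regions.
Variables (R : realType) (n : nat -> nat) (hs : forall l : nat, layer R (n l) (n l.+1)).
Variable gamma : nat -> nat -> seq nat.
Hypothesis gammaP : inGamma R gamma.
Local Open Scope ring_scope.

Definition regions_bounded l := forall K,
  #|[set a in finrange (psig hs l) | (K <= rdim l a)%N]|%:R
    <= \sum_(i < (n l).+1 | (K <= i)%N) chainvec R gamma n l i 0.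

Lemma regions_bounded0 : regions_bounded 0.
Proof.
move=> K; case: (leqP K (n 0)) => [le_K|lt_K].
  rewrite (bigD1 ord_max) //= mxE eqxx -[X in X <= _]addr0 lerD ?sumr_ge0 => // [|i _].
    by rewrite ler_nat (leq_trans (max_card _)) ?card_unit.
  by rewrite mxE.
rewrite (_ : [set _ in _ | _] = set0) ?cards0 ?sumr_ge0 // => [i _|].
  exact: chainvec_ge0.
by apply/setP => a; rewrite !inE andbF.
Qed.

Lemma regions_boundedS l : (0 < n l.+1)%N -> regions_bounded l -> regions_bounded l.+1.
Proof.
move=> n_gt0 bounded K; rewrite chainvec_tail.
rewrite (@card_fibers_fst _ _ _ (finrange (psig hs l))) => [|[a t]]; last first.
  by rewrite inE => /andP [/finrangeP [x [<- _]] _]; exact: mem_finrange.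
pose G k := (bound_col_tail gamma (n l.+1) K k)%:R : R.
rewrite natr_sum; apply: le_trans (ler_sum_by_tails (G := G) _ _ _ bounded).
- apply: ler_sum => a _; rewrite ler_nat.
  have [A [c fwdE]] := psig_affine hs a.
  apply: leq_trans (card_lsig_affine_tail gammaP (hs l) A c K n_gt0).
  apply/subset_leq_card/subsetP => t; rewrite !inE => /andP [/asboolP [x [psig_x sig_x]] le_K].
  rewrite le_K andbT; have [y fwd_x] := fwdE x psig_x.
  by apply/asboolP; exists y; rewrite -fwd_x.
- by move=> a _; exact: rdim_le.
- by move=> k k' le_kk'; rewrite ler_nat (bound_col_tail_homo gammaP _ n_gt0).
- by rewrite ler0n.
Qed.

Lemma regions_bounded_all L : (forall l, (l <= L)%N -> (0 < n l)%N) -> regions_bounded L.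
Proof.
elim: L => [_|L IH n_gt0]; first exact: regions_bounded0.
by apply: regions_boundedS; [exact: n_gt0 | apply: IH => l /leqW /n_gt0].
Qed.

End Regions.

Local Open Scope ring_scope.

Theorem mainTheorem2 (R : realType) (L : nat) (n : nat -> nat)
  (hs : forall l : nat, layer R (n l) (n l.+1))
  (gamma : nat -> nat -> seq nat) :
  (0 < L)%N -> (forall l, (l <= L)%N -> (0 < n l)%N) ->
  inGamma R gamma ->
  (#|msigset hs L|%:R : R) <= norm1 (chainvec R gamma n L).
Proof.
(* The bound also holds for L = 0. *)
move=> _ n_gt0 gammaP.
have := regions_bounded_all hs gammaP n_gt0 0.
under eq_bigl do rewrite leq0n.
rewrite (_ : [set _ in _ | _] = finrange (psig hs L)) => [bound|]; last first.
  by apply/setP => a; rewrite !inE andbT.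
apply: le_trans (le_trans _ bound) _; first by rewrite ler_nat card_msigset_le.
by rewrite /norm1 ler_sum // => i _; rewrite ger0_norm ?chainvec_ge0.
Qed.
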